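(* In a signed group the following hold. (1) If $n\in\{2,3\}$ and $E$ is a basic set of size $n$ containing at least one pair of anticommuting elements, then $E$ can be replaced by an anticommutative generator. (2) If $\mathbf u=(u_1,u_2,\dots)$ is a basic sequence with $u_k\circ u_{k+1}=-1$ for all $k$ and $u_i\circ u_j=1$ whenever $|i-j|\ge2$, then $e_k=u_1\cdots u_k$ defines an anticommutative generator $(e_k)$ which is a replacement of $\mathbf u$; conversely $u_k=e_{k-1}e_k$ up to sign, with $e_0=1$. (3) An anticommutative generator of even or countably infinite size and a chain of commuting anticommutative doubletons, i.e. a union of sets $D_k=\{d_{2k-1},d_{2k}\}$ with $d_{2k-1}\circ d_{2k}=-1$ and $D_i\circ D_j=1$ for $i\neq j$, are mutually replaceable: every generator of either kind has a replacement of the other kind. (4) In particular, a finite anticommutative generator $E$ of even size, or an infinite one, can be replaced by a generator $E'$ admitting a partition $E'=F_1\cup F_2\cup\cdots$ into mutually commuting anticommutative components of finite even or infinite size; for infinite $E$ the number of components can be either finite or infinite. (5) Let $E=K\cup M$ be a generator where $K\circ M=1$, $K$ is finite and anticommutative and $M$ is commutative. If $|K|$ is even and $M\neq\emptyset$, then $E$ has a replacement $K'\cup M'$ of the same kind with $|K'|=|K|+1$ and $|M'|=|M|-1$; if $|K|$ is odd, then it has a replacement $K'\cup M'$ of the same kind with $|K'|=|K|-1$ and $|M'|=|M|+1$.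
   Context: A signed group is a group containing a central element $-1\neq1$ with $(-1)^2=1$ such that any two elements either commute or anticommute ($ef=-fe$), and each element $e$ has $e^2\in\{\pm1\}$. Write $e\circ f=1$ if $ef=fe$ and $-1$ if $ef=-fe$; for sets, $A\circ B=1$ means every element of $A$ commutes with every element of $B$. For a sequence $\mathbf e$ and finitary $0$-$1$ sequence $\mathbf p$, $\mathbf e^{\mathbf p}=e_1^{p_1}e_2^{p_2}\cdots$. A set/sequence is basic if no product $\mathbf e^{\mathbf p}$ with $\mathbf p\neq\mathbf 0$ equals $\pm1$; a generator is a basic set/sequence, generating the group $\{\pm\mathbf e^{\mathbf p}\}$; a replacement of a generator is another generator generating the same group (generators differing only by signs and permutations are identified). A set is anticommutative if its distinct elements pairwise anticommute, commutative if they pairwise commute. *)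

From Stdlib Require Import List Arith Sorting.Sorted.
Import ListNotations.
Set Implicit Arguments.
Unset Strict Implicit.

Record SignedGroup := {
  sg_car :> Type;
  sg_mul : sg_car -> sg_car -> sg_car;
  sg_one : sg_car;
  sg_inv : sg_car -> sg_car;
  sg_neg1 : sg_car;
  sg_mulA : forall x y z, sg_mul x (sg_mul y z) = sg_mul (sg_mul x y) z;
  sg_mul1 : forall x, sg_mul sg_one x = x;
  sg_mul1r : forall x, sg_mul x sg_one = x;
  sg_mulV : forall x, sg_mul (sg_inv x) x = sg_one;
  sg_mulVr : forall x, sg_mul x (sg_inv x) = sg_one;
  sg_neg1_neq1 : sg_neg1 <> sg_one;
  sg_neg1_sq : sg_mul sg_neg1 sg_neg1 = sg_one;
  sg_neg1_central : forall x, sg_mul sg_neg1 x = sg_mul x sg_neg1;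
  sg_comm_or_anti : forall x y,
      sg_mul x y = sg_mul y x \/ sg_mul x y = sg_mul sg_neg1 (sg_mul y x);
  sg_sq : forall x, sg_mul x x = sg_one \/ sg_mul x x = sg_neg1
}.

Arguments sg_mul {s}.
Arguments sg_one {s}.
Arguments sg_inv {s}.
Arguments sg_neg1 {s}.

Section Defs.
Variable G : SignedGroup.

Definition gset := G -> Prop.

Definition commutes (x y : G) : Prop := sg_mul x y = sg_mul y x.
Definition anticommutes (x y : G) : Prop :=
  sg_mul x y = sg_mul sg_neg1 (sg_mul y x).

Definition lprod (s : list G) : G := fold_right sg_mul sg_one s.

Definition set_commute (A B : gset) : Prop :=
  forall x y, A x -> B y -> commutes x y.

Definition anticommutative (E : gset) : Prop :=
  forall x y, E x -> E y -> x <> y -> anticommutes x y.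
Definition commutative (E : gset) : Prop :=
  forall x y, E x -> E y -> commutes x y.

Definition basic (E : gset) : Prop :=
  forall s : list G, NoDup s -> s <> [] -> (forall y, In y s -> E y) ->
    lprod s <> sg_one /\ lprod s <> sg_neg1.

Definition generator (E : gset) : Prop := basic E.

Definition gen_group (E : gset) : gset :=
  fun x => exists s : list G, NoDup s /\ (forall y, In y s -> E y) /\
    (x = lprod s \/ x = sg_mul sg_neg1 (lprod s)).

Definition replacement (E E' : gset) : Prop :=
  generator E' /\ forall x, gen_group E x <-> gen_group E' x.

Definition has_card (E : gset) (n : nat) : Prop :=
  exists s : list G, NoDup s /\ length s = n /\ forall x, E x <-> In x s.
Definition countably_infinite (E : gset) : Prop :=
  exists f : nat -> G, (forall i j, f i = f j -> i = j) /\
    forall x, E x <-> exists k, f k = x.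
Definition equinumerous (A B : gset) : Prop :=
  exists f : G -> G, (forall x, A x -> B (f x)) /\
    (forall x y, A x -> A y -> f x = f y -> x = y) /\
    (forall y, B y -> exists x, A x /\ f x = y).

Definition idx (N : option nat) (k : nat) : Prop :=
  1 <= k /\ match N with Some n => k <= n | None => True end.

Definition seq_set (N : option nat) (u : nat -> G) : gset :=
  fun x => exists k, idx N k /\ u k = x.

(* basic sequence: u^p <> +-1 for every finitary 0-1 sequence p <> 0,
   p encoded as its (strictly increasing) support *)
Definition basic_seq (N : option nat) (u : nat -> G) : Prop :=
  forall s : list nat, s <> [] -> Sorted lt s -> (forall k, In k s -> idx N k) ->
    lprod (map u s) <> sg_one /\ lprod (map u s) <> sg_neg1.

Definition doubleton_chain (E : gset) : Prop :=
  exists (N : option nat) (a b : nat -> G),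
    (forall x, E x <-> exists k, idx N k /\ (x = a k \/ x = b k)) /\
    (forall k, idx N k -> anticommutes (a k) (b k)) /\
    (forall i j, idx N i -> idx N j -> i <> j ->
       set_commute (fun x => x = a i \/ x = b i) (fun y => y = a j \/ y = b j)).

Definition ac_component_partition (E : gset) (J : option nat)
    (F : nat -> gset) : Prop :=
  (forall x, E x <-> exists i, idx J i /\ F i x) /\
  (forall i j x, idx J i -> idx J j -> F i x -> F j x -> i = j) /\
  (forall i, idx J i -> exists x, F i x) /\
  (forall i, idx J i -> anticommutative (F i)) /\
  (forall i, idx J i -> (exists n, has_card (F i) (2 * n)) \/ countably_infinite (F i)) /\
  (forall i j, idx J i -> idx J j -> i <> j -> set_commute (F i) (F j)).

End Defs.

(* Write [a o b = (-1)^(ac a b)]: the bit [ac] is symmetric and additive in each argument,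
   [ac (a b) c = ac a c (+) ac b c], so commutation is an F_2-bilinear form on the generators.
   Every replacement below is unitriangular: a generator [x_i] becomes [w x_i] with [w] in the
   group generated by the earlier generators; since [x_i] never lies in that group, the new set
   is still basic and generates the same group.
   (1) The third generator is multiplied by [x] and/or [y] so as to anticommute with both.
   (2) [e_k = e_(k-1) u_k] is triangular, and for [i < j] the only anticommuting pair between
       [u_1 ... u_i] and [u_(i+1) ... u_j] is [(u_i, u_(i+1))].
   (3) Group the generators into consecutive pairs and multiply each member of the [m]-th pair
       by the product of the [2m] earlier generators: this flips exactly the commutation between
       different pairs, hence turns an anticommutative family into commuting anticommutative
       doubletons, and back.  (4) The doubletons are then the components.
   (5) The product [P] of [K] commutes with [M], and with [k] in [K] it anticommutes iff [|K|]
       is even; so [P m0] can join [K], or [P] can replace the last element of [K] and join [M]. *)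

From Stdlib Require Import List Arith Lia Bool Sorting.Sorted Sorting.Permutation
  Sorting.Mergesort Classical ClassicalEpsilon.
Import ListNotations.
Set Implicit Arguments.
Unset Strict Implicit.

Section SignedGroupTheory.
Variable G : SignedGroup.
Local Notation mul := (@sg_mul G).
Local Notation one := (@sg_one G).

Lemma mulA x y z : mul x (mul y z) = mul (mul x y) z.
Proof. apply sg_mulA. Qed.

Lemma mulI a b g : mul a g = mul b g -> a = b.
Proof.
  intro H. rewrite <- (sg_mul1r a), <- (sg_mul1r b), <- (sg_mulVr g), !mulA, H. reflexivity.
Qed.

Definition sgn (b : bool) : G := if b then sg_neg1 else one.

Lemma sgn_inj b c : sgn b = sgn c -> b = c.
Proof.
  destruct b, c; simpl; auto; intro H; exfalso; apply (@sg_neg1_neq1 G); auto.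
Qed.

Lemma sgnM b c x : mul (sgn b) (mul (sgn c) x) = mul (sgn (xorb b c)) x.
Proof. destruct b, c; simpl; rewrite ?sg_mul1; auto. rewrite mulA, sg_neg1_sq, sg_mul1; auto. Qed.

Lemma sgn_sgn b c : mul (sgn b) (sgn c) = sgn (xorb b c).
Proof. rewrite <- (sg_mul1r (sgn c)), sgnM, sg_mul1r. reflexivity. Qed.

Lemma sgn_central b x : mul (sgn b) x = mul x (sgn b).
Proof. destruct b; simpl. apply sg_neg1_central. rewrite sg_mul1, sg_mul1r; auto. Qed.

Lemma mul_sgnC a b x : mul a (mul (sgn b) x) = mul (sgn b) (mul a x).
Proof. rewrite !mulA, sgn_central; auto. Qed.

Lemma sgn0 x : mul (sgn false) x = x.
Proof. apply sg_mul1. Qed.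

Lemma sgnK b x : mul (sgn b) (mul (sgn b) x) = x.
Proof. rewrite sgnM, xorb_nilpotent. apply sgn0. Qed.

Lemma sq_sgn x : exists b, mul x x = sgn b.
Proof. destruct (sg_sq x) as [H|H]; [exists false|exists true]; auto. Qed.

Definition ac (a b : G) : bool :=
  if excluded_middle_informative (anticommutes a b) then true else false.

Lemma ac_spec a b : mul a b = mul (sgn (ac a b)) (mul b a).
Proof.
  unfold ac; destruct excluded_middle_informative as [H|H]; simpl; auto.
  rewrite sg_mul1. destruct (sg_comm_or_anti a b); auto; contradiction.
Qed.

Lemma ac_char a b c : mul a b = mul (sgn c) (mul b a) -> ac a b = c.
Proof. rewrite ac_spec. intro H. apply sgn_inj. eapply mulI; eauto. Qed.

Lemma ac_anti a b : ac a b = true <-> anticommutes a b.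
Proof.
  split; intro H.
  - unfold anticommutes. rewrite ac_spec, H. auto.
  - apply ac_char. exact H.
Qed.

Lemma ac_comm a b : ac a b = false <-> commutes a b.
Proof.
  split; intro H.
  - unfold commutes. rewrite ac_spec, H. apply sg_mul1.
  - apply ac_char. rewrite sgn0. exact H.
Qed.

Lemma acC a b : ac b a = ac a b.
Proof. apply ac_char. rewrite (ac_spec a b), sgnK. reflexivity. Qed.

Lemma acxx a : ac a a = false.
Proof. apply ac_char. rewrite sgn0; auto. Qed.

Lemma ac_mull a b c : ac (mul a b) c = xorb (ac a c) (ac b c).
Proof.
  apply ac_char.
  rewrite <- mulA, (ac_spec b c), mul_sgnC, (mulA a c b), (ac_spec a c), <- (mulA (sgn _)),
    sgnM, <- mulA.
  f_equal. destruct (ac a c), (ac b c); auto.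
Qed.

Lemma ac_mulr a b c : ac c (mul a b) = xorb (ac c a) (ac c b).
Proof. rewrite acC, ac_mull, (acC a), (acC b); auto. Qed.

Lemma ac1 a : ac one a = false.
Proof. apply ac_comm. unfold commutes. rewrite sg_mul1, sg_mul1r. reflexivity. Qed.

Lemma anticommutes_neq (a b : G) : anticommutes a b -> a <> b.
Proof. intros H ->. apply ac_anti in H. rewrite acxx in H. discriminate. Qed.

Lemma lprod_cons a l : lprod (a :: l) = mul a (lprod l).
Proof. reflexivity. Qed.

Lemma lprod_app l1 l2 : lprod (l1 ++ l2) = mul (lprod l1) (lprod l2).
Proof.
  induction l1 as [|a l1 IH]; cbn [app].
  - symmetry. apply sg_mul1.
  - rewrite !lprod_cons, IH, mulA. reflexivity.
Qed.

Lemma lprod_rcons l a : lprod (l ++ [a]) = mul (lprod l) a.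
Proof. rewrite lprod_app. unfold lprod at 2. simpl. rewrite sg_mul1r. reflexivity. Qed.

Lemma ac_lprod_commuting l c : (forall a, In a l -> ac a c = false) -> ac (lprod l) c = false.
Proof.
  induction l as [|a l IH]; intro H. apply ac1.
  rewrite lprod_cons, ac_mull, H, IH; simpl; auto. intros; apply H; simpl; auto.
Qed.

Lemma lprod_perm (l l' : list G) : Permutation l l' -> exists b, lprod l' = mul (sgn b) (lprod l).
Proof.
  induction 1.
  - exists false; rewrite sgn0; auto.
  - destruct IHPermutation as [b Hb]. exists b. rewrite !lprod_cons, Hb, mul_sgnC; auto.
  - exists (ac y x).
    rewrite !lprod_cons, (mulA y x), (ac_spec y x), <- (mulA (sgn _)), sgnK, mulA. reflexivity.
  - destruct IHPermutation1 as [b Hb], IHPermutation2 as [c Hc]. exists (xorb c b).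
    rewrite Hc, Hb, sgnM; auto.
Qed.

Lemma lprod_extract (x : G) u : NoDup u -> In x u -> exists r b, NoDup r /\ ~ In x r /\
  (forall y, In y r -> In y u) /\ lprod u = mul (sgn b) (mul x (lprod r)).
Proof.
  induction u as [|y u IH]; intros Hn Hi. destruct Hi.
  inversion Hn as [|? ? Hy Hu]; subst.
  destruct (classic (y = x)) as [<-|Hne].
  - exists u, false. repeat split; auto. intros; right; auto. rewrite sgn0; auto.
  - destruct Hi as [Hi|Hi]; [congruence|].
    destruct (IH Hu Hi) as (r & b & Hr1 & Hr2 & Hr3 & Hr4).
    exists (y :: r), (xorb b (ac y x)). repeat split.
    + constructor; auto.
    + intros [H|H]; auto.
    + intros z [<-|Hz]; simpl; auto.
    + rewrite !lprod_cons, Hr4, mul_sgnC, (mulA y x), (ac_spec y x), <- (mulA (sgn _)), sgnM,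
        <- mulA. reflexivity.
Qed.

Lemma gen_groupE (A : gset G) g : gen_group A g <->
  exists s b, NoDup s /\ (forall y, In y s -> A y) /\ g = mul (sgn b) (lprod s).
Proof.
  split.
  - intros (s & H1 & H2 & [H3|H3]); exists s.
    + exists false; rewrite sgn0; auto.
    + exists true; auto.
  - intros (s & b & H1 & H2 & H3); exists s; repeat split; auto.
    destruct b; simpl in H3; auto. rewrite sg_mul1 in H3; auto.
Qed.

Lemma gen_group_sgnM (A : gset G) b g : gen_group A g -> gen_group A (mul (sgn b) g).
Proof.
  rewrite !gen_groupE. intros (s & c & H1 & H2 & ->). exists s, (xorb b c).
  repeat split; auto. apply sgnM.
Qed.

Lemma gen_group_sgn (A : gset G) b : gen_group A (sgn b).
Proof.
  apply gen_groupE. exists [], b. repeat split. constructor. intros y [].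
  unfold lprod; simpl. rewrite sg_mul1r; auto.
Qed.

Lemma gen_group1 (A : gset G) : gen_group A one.
Proof. apply (gen_group_sgn A false). Qed.

Lemma gen_group_gen (A : gset G) g : A g -> gen_group A g.
Proof.
  intro H. apply gen_groupE. exists [g], false. repeat split.
  repeat constructor; auto. intros y [->|[]]; auto.
  rewrite sgn0. unfold lprod; simpl. rewrite sg_mul1r; auto.
Qed.

Lemma gen_group_genM (A : gset G) x g : A x -> gen_group A g -> gen_group A (mul x g).
Proof.
  intros Hx. rewrite !gen_groupE. intros (s & b & H1 & H2 & ->).
  rewrite mul_sgnC.
  destruct (classic (In x s)) as [Hi|Hi].
  - destruct (lprod_extract H1 Hi) as (r & c & Hr1 & _ & Hr2 & ->).
    destruct (sq_sgn x) as [d Hd].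
    exists r, (xorb b (xorb c d)). repeat split; auto.
    rewrite (mul_sgnC x c), (mulA x x), Hd, !sgnM.
    now destruct b, c, d.
  - exists (x :: s), b. repeat split; auto. constructor; auto.
    intros y [<-|Hy]; auto.
Qed.

Lemma gen_groupM (A : gset G) g h : gen_group A g -> gen_group A h -> gen_group A (mul g h).
Proof.
  intros Hg Hh. apply gen_groupE in Hg. destruct Hg as (s & b & _ & Hs & ->).
  rewrite <- mulA. apply gen_group_sgnM.
  induction s as [|a s IH].
  - unfold lprod; simpl. rewrite sg_mul1. exact Hh.
  - rewrite lprod_cons, <- mulA. apply gen_group_genM; simpl in Hs; auto.
Qed.

Lemma gen_group_lprod (A : gset G) l :
  (forall y, In y l -> gen_group A y) -> gen_group A (lprod l).
Proof.
  induction l as [|a l IH]; intro H. apply gen_group1.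
  rewrite lprod_cons. apply gen_groupM; simpl in H; auto.
Qed.

Lemma gen_group_min (A B : gset G) g :
  (forall y, A y -> gen_group B y) -> gen_group A g -> gen_group B g.
Proof.
  intros H Hg. apply gen_groupE in Hg. destruct Hg as (s & b & _ & Hs & ->).
  apply gen_group_sgnM, gen_group_lprod. auto.
Qed.

Lemma gen_group_mono (A B : gset G) g : (forall y, A y -> B y) -> gen_group A g -> gen_group B g.
Proof. intro H; apply gen_group_min; auto using gen_group_gen. Qed.

Lemma gen_group_ext (A B : gset G) g : (forall y, A y <-> B y) -> (gen_group A g <-> gen_group B g).
Proof. intro H; split; apply gen_group_mono; firstorder. Qed.

Lemma gen_group_divr (A : gset G) g h :
  gen_group A (mul g h) -> gen_group A h -> gen_group A g.
Proof.
  intros H1 H2. destruct (sq_sgn h) as [b Hb].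
  assert (H3 := gen_groupM H1 H2). rewrite <- mulA, Hb, <- sgn_central in H3.
  apply (gen_group_sgnM b) in H3. rewrite sgnK in H3. exact H3.
Qed.

Lemma basic_ext (A B : gset G) : (forall y, A y <-> B y) -> basic A -> basic B.
Proof. intros H HA s H1 H2 H3. apply HA; auto. intros; apply H; auto. Qed.

Lemma replacement_ext (E1 E2 F1 F2 : gset G) : (forall g, E1 g <-> E2 g) ->
  (forall g, F1 g <-> F2 g) -> replacement E2 F2 -> replacement E1 F1.
Proof.
  intros HE HF [Hb Hs]. split.
  - apply basic_ext with (A := F2); firstorder.
  - intro g. rewrite (gen_group_ext g HE), (gen_group_ext g HF). auto.
Qed.

Lemma replacement_refl (E : gset G) : generator E -> replacement E E.
Proof. intro HE. split; auto. reflexivity. Qed.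

Lemma basic_not_gen (E A : gset G) x : basic E -> E x -> (forall y, A y -> E y /\ y <> x) ->
  ~ gen_group A x.
Proof.
  intros HE Hx HA Hg. apply gen_groupE in Hg. destruct Hg as (s & b & H1 & H2 & H3).
  assert (Hxs : ~ In x s) by (intro Hi; apply (HA x); auto).
  destruct (sq_sgn x) as [c Hc].
  destruct (HE (x :: s)) as [Hne1 Hnen1].
  - constructor; auto.
  - discriminate.
  - intros y [<-|Hy]; auto. apply HA; auto.
  - rewrite lprod_cons, <- (sgnK b (lprod s)), <- H3, mul_sgnC, Hc, sgn_sgn in Hne1, Hnen1.
    destruct (xorb b c); auto.
Qed.

Definition indexed_set (D : nat -> Prop) (x : nat -> G) (B : gset G) : gset G :=
  fun g => (exists i, D i /\ x i = g) \/ B g.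

Section Triangular.
Variables (D : nat -> Prop) (x y : nat -> G) (B : gset G).

Let prefix (i : nat) : gset G := indexed_set (fun j => D j /\ j < i) x B.

Hypothesis x_basic : basic (indexed_set D x B).
Hypothesis x_inj : forall i j, D i -> D j -> x i = x j -> i = j.
Hypothesis x_notin_B : forall i, D i -> ~ B (x i).
Hypothesis y_triangular : forall i, D i ->
  exists w, gen_group (prefix i) w /\ y i = mul (x i) w.

Lemma triangular_prefix_mono i j g : j <= i -> gen_group (prefix j) g -> gen_group (prefix i) g.
Proof.
  intro Hji. apply gen_group_mono.
  intros h [(k & [Hk Hkj] & <-)|Hh]; [left; exists k; repeat split; auto; lia|right; auto].
Qed.

Lemma triangular_x_notin_prefix i z : D i -> gen_group (prefix i) z ->
  ~ gen_group (prefix i) (mul (x i) z).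
Proof.
  intros Hi Hz H. apply (gen_group_divr H) in Hz. revert Hz.
  apply (basic_not_gen x_basic); [left; eauto|].
  intros g [(j & [Hj Hji] & <-)|Hg]; split.
  - left; eauto.
  - intro He. apply x_inj in He; auto. lia.
  - right; auto.
  - intros ->. apply (x_notin_B Hi); auto.
Qed.

Lemma triangular_y_notin_prefix i : D i -> ~ gen_group (prefix i) (y i).
Proof.
  intro Hi. destruct (y_triangular Hi) as (w & Hw & ->). apply triangular_x_notin_prefix; auto.
Qed.

Lemma triangular_y_in_prefix i j : D j -> j < i -> gen_group (prefix i) (y j).
Proof.
  intros Hj Hji. destruct (y_triangular Hj) as (w & Hw & ->). apply gen_groupM.
  - apply gen_group_gen. left; exists j; auto.
  - apply triangular_prefix_mono with j; auto. lia.
Qed.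

Lemma triangular_y_inj i j : D i -> D j -> y i = y j -> i = j.
Proof.
  intros Hi Hj He. destruct (lt_eq_lt_dec i j) as [[H|H]|H]; auto; exfalso.
  - apply (triangular_y_notin_prefix Hj). rewrite <- He. apply triangular_y_in_prefix; auto.
  - apply (triangular_y_notin_prefix Hi). rewrite He. apply triangular_y_in_prefix; auto.
Qed.

Lemma triangular_y_notin_B i : D i -> ~ B (y i).
Proof. intros Hi Hb. apply (triangular_y_notin_prefix Hi). apply gen_group_gen. right; auto. Qed.

Lemma triangular_list_cases s : (forall g, In g s -> indexed_set D y B g) ->
  (forall g, In g s -> B g) \/
  exists i, D i /\ In (y i) s /\ forall g, In g s -> g <> y i -> gen_group (prefix i) g.
Proof.
  induction s as [|a s IH]; intro Hs. left; intros g [].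
  assert (Ha : indexed_set D y B a) by (apply Hs; simpl; auto).
  destruct IH as [IH|(i & Hi & Hin & Hall)]; [intros; apply Hs; simpl; auto| |].
  - destruct Ha as [(k & Hk & <-)|Ha].
    + right. exists k. repeat split; simpl; auto.
      intros g [<-|Hg] Hne; [congruence|]. apply gen_group_gen; right; auto.
    + left. intros g [<-|Hg]; auto.
  - destruct Ha as [(k & Hk & <-)|Ha].
    + destruct (lt_eq_lt_dec k i) as [[Hki|<-]|Hik].
      * right. exists i. repeat split; simpl; auto.
        intros g [<-|Hg] Hne; auto using triangular_y_in_prefix.
      * right. exists k. repeat split; simpl; auto. intros g [<-|Hg] Hne; auto; congruence.
      * right. exists k. repeat split; simpl; auto.
        intros g [<-|Hg] Hne; [congruence|].
        destruct (classic (g = y i)) as [->|Hgi]; auto using triangular_y_in_prefix.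
        apply triangular_prefix_mono with i; auto. lia.
    + right. exists i. repeat split; simpl; auto.
      intros g [<-|Hg] Hne; auto. apply gen_group_gen; right; auto.
Qed.

Lemma triangular_basic : basic (indexed_set D y B).
Proof.
  intros s Hn Hne Hs.
  destruct (triangular_list_cases Hs) as [HB|(i & Hi & Hin & Hall)].
  { apply x_basic; auto. intros; right; auto. }
  destruct (lprod_extract Hn Hin) as (r & b & _ & Hr & Hrs & Hprod).
  destruct (y_triangular Hi) as (w & Hw & Hy).
  assert (Hz : gen_group (prefix i) (mul w (lprod r))).
  { apply gen_groupM; auto. apply gen_group_lprod. intros g Hg.
    apply Hall; auto. intros ->; contradiction. }
  assert (Hnot := triangular_x_notin_prefix Hi Hz).
  rewrite mulA, <- Hy in Hnot.
  split; intro He; apply Hnot; rewrite <- (sgnK b (mul (y i) _)), <- Hprod, He;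
    apply gen_group_sgnM; [apply gen_group1|apply (gen_group_sgn _ true)].
Qed.

Lemma triangular_gen_group g : gen_group (indexed_set D x B) g <-> gen_group (indexed_set D y B) g.
Proof.
  split; apply gen_group_min; intros h [(i & Hi & <-)|Hh];
    try (apply gen_group_gen; right; assumption).
  - induction i as [i IH] using lt_wf_ind.
    destruct (y_triangular Hi) as (w & Hw & Hy).
    apply gen_group_divr with w.
    + rewrite <- Hy. apply gen_group_gen; left; eauto.
    + apply gen_group_min with (prefix i); auto.
      intros h [(j & [Hj Hji] & <-)|Hh]; [apply IH|apply gen_group_gen; right]; auto.
  - destruct (y_triangular Hi) as (w & Hw & ->). apply gen_groupM.
    + apply gen_group_gen; left; eauto.
    + apply gen_group_mono with (prefix i); auto.
      intros g0 [(j & [Hj _] & <-)|Hg0]; [left; eauto|right; auto].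
Qed.

Lemma triangular_replacement : replacement (indexed_set D x B) (indexed_set D y B).
Proof. split. apply triangular_basic. apply triangular_gen_group. Qed.

End Triangular.

Lemma triangular_left_replacement (D : nat -> Prop) (x y : nat -> G) (B : gset G) :
  basic (indexed_set D x B) -> (forall i j, D i -> D j -> x i = x j -> i = j) ->
  (forall i, D i -> ~ B (x i)) ->
  (forall i, D i -> exists w,
     gen_group (indexed_set (fun j => D j /\ j < i) x B) w /\ y i = mul w (x i)) ->
  replacement (indexed_set D x B) (indexed_set D y B) /\
  (forall i j, D i -> D j -> y i = y j -> i = j) /\ (forall i, D i -> ~ B (y i)).
Proof.
  intros Hb Hinj HB Htri.
  assert (Hr : forall i, D i -> exists w,
     gen_group (indexed_set (fun j => D j /\ j < i) x B) w /\ y i = mul (x i) w).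
  { intros i Hi. destruct (Htri i Hi) as (w & Hw & ->).
    exists (mul (sgn (ac w (x i))) w). split; [apply gen_group_sgnM; auto|].
    rewrite ac_spec, mul_sgnC. reflexivity. }
  split; [|split]; intros;
    eauto using triangular_replacement, triangular_y_inj, triangular_y_notin_B.
Qed.

Lemma replacement_one (E : gset G) a w : basic (fun g => g = a \/ E g) -> ~ E a ->
  gen_group E w ->
  replacement (fun g => g = a \/ E g) (fun g => g = mul w a \/ E g) /\ ~ E (mul w a).
Proof.
  intros Hb Ha Hw.
  assert (Hset : forall b g, indexed_set (fun i => i = 0) (fun _ => b) E g <-> g = b \/ E g).
  { intros b g. unfold indexed_set. split.
    - intros [(i & _ & <-)|H]; auto.
    - intros [->|H]; [left; exists 0|right]; auto. }
  destruct (@triangular_left_replacement (fun i => i = 0) (fun _ => a) (fun _ => mul w a) E)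
    as (Hr & _ & HB).
  - apply basic_ext with (2 := Hb). intro; rewrite Hset; tauto.
  - intros i j -> ->; auto.
  - intros; auto.
  - intros i ->. exists w. split; auto. apply gen_group_mono with (2 := Hw).
    intros g Hg; right; auto.
  - split; [|apply (HB 0); auto].
    apply replacement_ext with (3 := Hr); intro; rewrite Hset; tauto.
Qed.

Definition inj_idx (N : option nat) (x : nat -> G) : Prop :=
  forall i j, idx N i -> idx N j -> x i = x j -> i = j.

Lemma idx_le N i j : idx N j -> 1 <= i -> i <= j -> idx N i.
Proof. destruct N; unfold idx; intuition lia. Qed.

Lemma seq_set_mono n m (x : nat -> G) g : n <= m ->
  gen_group (seq_set (Some n) x) g -> gen_group (seq_set (Some m) x) g.
Proof.
  intro Hnm. apply gen_group_mono. intros h (j & [Hj1 Hj2] & <-). exists j; split; auto.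
  split; simpl; lia.
Qed.

Lemma seq_triangular_replacement N (x y : nat -> G) : basic (seq_set N x) -> inj_idx N x ->
  (forall i, idx N i -> exists w, gen_group (seq_set (Some (i - 1)) x) w /\ y i = mul w (x i)) ->
  replacement (seq_set N x) (seq_set N y) /\ inj_idx N y.
Proof.
  intros Hb Hinj Htri.
  assert (Hset : forall z g, seq_set N z g <-> indexed_set (idx N) z (fun _ => False) g).
  { intros z g. unfold indexed_set, seq_set. tauto. }
  destruct (@triangular_left_replacement (idx N) x y (fun _ => False)) as (Hr & Hiy & _); auto.
  - apply basic_ext with (2 := Hb). intro; apply Hset.
  - intros i Hi. destruct (Htri i Hi) as (w & Hw & Hy). exists w. split; auto.
    apply gen_group_mono with (2 := Hw). intros g (j & [Hj1 Hj2] & <-). left. exists j.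
    repeat split; auto. apply idx_le with i; auto. all: simpl in Hj2; destruct Hi; lia.
  - split; auto. apply replacement_ext with (3 := Hr); intro; apply Hset.
Qed.

Definition prefix_prod (u : nat -> G) (k : nat) : G := lprod (map u (seq 1 k)).

Lemma prefix_prodS (u : nat -> G) k : prefix_prod u (S k) = mul (prefix_prod u k) (u (S k)).
Proof. unfold prefix_prod. rewrite seq_S, map_app. cbn [map]. rewrite lprod_rcons. reflexivity. Qed.

Lemma gen_group_prefix_prod (u : nat -> G) n : gen_group (seq_set (Some n) u) (prefix_prod u n).
Proof.
  apply gen_group_lprod. intros g Hg. apply in_map_iff in Hg. destruct Hg as (j & <- & Hj).
  apply in_seq in Hj. apply gen_group_gen. exists j. split; auto. split; simpl; lia.
Qed.

Lemma natleb_le a b : NatOrder.leb a b = true <-> a <= b.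
Proof.
  revert b; induction a as [|a IH]; intros [|b]; simpl.
  1-2: split; auto; lia.
  - split; [discriminate|lia].
  - rewrite IH. lia.
Qed.

Lemma sort_lt (l : list nat) : NoDup l -> Sorted lt (NatSort.sort l).
Proof.
  intro Hl. assert (Hnd := Permutation_NoDup (NatSort.Permuted_sort l) Hl).
  assert (Hs : StronglySorted (fun a b => NatOrder.leb a b = true) (NatSort.sort l)).
  { apply NatSort.StronglySorted_sort. intros a b c. unfold is_true. rewrite !natleb_le. lia. }
  apply StronglySorted_Sorted. induction Hs as [|a s Hs IH Hf]; constructor.
  - inversion Hnd; auto.
  - inversion Hnd as [|? ? Ha _]; subst. rewrite Forall_forall in *. intros b Hb.
    specialize (Hf b Hb). apply natleb_le in Hf. assert (a <> b) by (intros ->; auto). lia.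
Qed.

Lemma seq_set_list N (x : nat -> G) s : (forall g, In g s -> seq_set N x g) ->
  exists l, map x l = s /\ forall k, In k l -> idx N k.
Proof.
  induction s as [|g s IH]; intro H. exists []; split; simpl; auto; intros k [].
  destruct IH as (l & Hl & Hl2). intros; apply H; simpl; auto.
  destruct (H g (or_introl eq_refl)) as (k & Hk & Hkg).
  exists (k :: l). simpl. rewrite Hl, Hkg. split; auto. intros k' [<-|Hk']; auto.
Qed.

Lemma basic_seq_set N (x : nat -> G) : basic_seq N x -> basic (seq_set N x).
Proof.
  intros Hb s Hn Hne Hs. destruct (seq_set_list Hs) as (l & <- & Hl).
  assert (Hp := NatSort.Permuted_sort l).
  destruct (lprod_perm (Permutation_map x Hp)) as [b Hb2].
  destruct (Hb (NatSort.sort l)) as [H1 H2].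
  - intro H. rewrite H in Hp. apply Permutation_sym, Permutation_nil in Hp. subst. auto.
  - apply sort_lt. exact (NoDup_map_inv _ _ Hn).
  - intros k Hk. apply Hl. apply Permutation_in with (NatSort.sort l); auto.
    apply Permutation_sym; auto.
  - assert (Hc : forall c, lprod (map x l) <> sgn c).
    { intros c Hc. rewrite Hc, sgn_sgn in Hb2. destruct (xorb b c); auto. }
    split; [apply (Hc false)|apply (Hc true)].
Qed.

Lemma basic_seq_inj N (x : nat -> G) : basic_seq N x -> inj_idx N x.
Proof.
  intros Hb.
  assert (Hlt : forall a b, idx N a -> idx N b -> a < b -> x a <> x b).
  { intros a b Ha Hb' Hab Heq. destruct (Hb [a; b]) as [H1 H2].
    - discriminate.
    - repeat constructor. lia.
    - intros k [<-|[<-|[]]]; auto.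
    - unfold lprod in H1, H2. simpl in H1, H2. rewrite sg_mul1r, Heq in H1, H2.
      destruct (sq_sgn (x b)) as [[|] Hc]; rewrite Hc in H1, H2; auto. }
  intros i j Hi Hj He. destruct (lt_eq_lt_dec i j) as [[H|H]|H]; auto; exfalso.
  - exact (Hlt i j Hi Hj H He).
  - exact (Hlt j i Hj Hi H (eq_sym He)).
Qed.

Lemma basic_seq_of_set N (x : nat -> G) : basic (seq_set N x) -> inj_idx N x -> basic_seq N x.
Proof.
  intros Hb Hi l Hne Hs Hl.
  apply Sorted_StronglySorted in Hs; [|intros a b c; lia].
  assert (Hn : NoDup (map x l)).
  { clear Hne. induction Hs as [|a l Hs IH Hf]; simpl; constructor.
    - intro H. apply in_map_iff in H. destruct H as (b & Hb' & Hbl).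
      rewrite Forall_forall in Hf. specialize (Hf b Hbl).
      apply Hi in Hb'; simpl in Hl; auto. lia.
    - apply IH. intros; apply Hl; simpl; auto. }
  apply Hb; auto.
  - destruct l; simpl; congruence.
  - intros g Hg. apply in_map_iff in Hg. destruct Hg as (k & <- & Hk). exists k; auto.
Qed.

Section PrefixProducts.
Variables (N : option nat) (u : nat -> G).
Hypothesis u_basic : basic_seq N u.
Hypothesis u_adjacent : forall k, idx N k -> idx N (S k) -> anticommutes (u k) (u (S k)).
Hypothesis u_far : forall i j, idx N i -> idx N j -> (i + 2 <= j \/ j + 2 <= i) ->
  commutes (u i) (u j).

Lemma ac_prefix_prod_far n b : n + 2 <= b -> idx N b -> ac (prefix_prod u n) (u b) = false.
Proof.
  intros Hnb Hb. apply ac_lprod_commuting. intros a Ha.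
  apply in_map_iff in Ha. destruct Ha as (a' & <- & Ha). apply in_seq in Ha.
  apply ac_comm, u_far; [apply idx_le with b; auto; lia|auto|lia].
Qed.

Lemma prefix_prod_anticommute i j : idx N i -> idx N j -> i < j ->
  anticommutes (prefix_prod u i) (prefix_prod u j).
Proof.
  intros Hi Hj Hij. apply ac_anti.
  assert (Hsplit : prefix_prod u j =
    mul (prefix_prod u i) (mul (u (S i)) (lprod (map u (seq (S (S i)) (j - S i)))))).
  { unfold prefix_prod. replace j with (i + S (j - S i)) at 1 by lia.
    rewrite seq_app, map_app, lprod_app. reflexivity. }
  assert (Hrest : ac (lprod (map u (seq (S (S i)) (j - S i)))) (prefix_prod u i) = false).
  { apply ac_lprod_commuting. intros a Ha. apply in_map_iff in Ha.
    destruct Ha as (b & <- & Hb). apply in_seq in Hb.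
    rewrite acC. apply ac_prefix_prod_far; [lia|]. apply idx_le with j; auto; lia. }
  destruct i as [|i]; [destruct Hi; lia|].
  assert (HSi : idx N (S (S i))) by (apply idx_le with j; auto; lia).
  rewrite Hsplit, ac_mulr, acxx, ac_mulr, (acC (lprod _)), Hrest,
    prefix_prodS, ac_mull, ac_prefix_prod_far, (proj2 (ac_anti _ _) (u_adjacent Hi HSi)); auto; lia.
Qed.

Lemma prefix_prod_replacement :
  basic_seq N (prefix_prod u) /\
  (forall i j, idx N i -> idx N j -> i <> j -> anticommutes (prefix_prod u i) (prefix_prod u j)) /\
  (forall x, gen_group (seq_set N u) x <-> gen_group (seq_set N (prefix_prod u)) x) /\
  (forall k, idx N k ->
     u k = mul (prefix_prod u (k - 1)) (prefix_prod u k) \/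
     u k = mul sg_neg1 (mul (prefix_prod u (k - 1)) (prefix_prod u k))).
Proof.
  assert (HprodS : forall k, idx N k -> prefix_prod u k = mul (prefix_prod u (k - 1)) (u k)).
  { intros [|k] [Hk _]; [lia|]. rewrite prefix_prodS. do 3 f_equal; lia. }
  destruct (@seq_triangular_replacement N u (prefix_prod u)) as [[Hgen Hspan] Hinj].
  - apply basic_seq_set, u_basic.
  - apply basic_seq_inj, u_basic.
  - intros k Hk. exists (prefix_prod u (k - 1)). split; auto using gen_group_prefix_prod.
  - split; [|split; [|split]].
    + apply basic_seq_of_set; auto.
    + intros i j Hi Hj Hne. destruct (Nat.lt_gt_cases i j) as [[H|H] _]; auto.
      * apply prefix_prod_anticommute; auto.
      * apply ac_anti. rewrite acC. apply ac_anti, prefix_prod_anticommute; auto.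
    + exact Hspan.
    + intros k Hk. rewrite (HprodS k Hk), mulA.
      destruct (sq_sgn (prefix_prod u (k - 1))) as [[|] ->]; [right|left].
      * rewrite mulA, sg_neg1_sq, sg_mul1; auto.
      * rewrite sg_mul1; auto.
Qed.

End PrefixProducts.

Lemma in_perm_cons (a : G) l : In a l -> exists l', Permutation l (a :: l').
Proof.
  intro H. apply in_split in H. destruct H as (l1 & l2 & ->). exists (l1 ++ l2).
  apply Permutation_sym, Permutation_middle.
Qed.

Lemma has_card_enum_pair (E : gset G) n x y : has_card E n -> E x -> E y ->
  anticommutes x y -> exists l, length l = n - 2 /\ NoDup (x :: y :: l) /\
  forall g, E g <-> In g (x :: y :: l).
Proof.
  intros (s & Hs & Hlen & HEs) Hx Hy Hxy. apply HEs in Hx, Hy.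
  destruct (in_perm_cons Hx) as (s1 & Hs1).
  assert (Hy1 : In y s1).
  { apply (Permutation_in _ Hs1) in Hy. destruct Hy as [->|Hy]; auto.
    exfalso; apply (anticommutes_neq Hxy); auto. }
  destruct (in_perm_cons Hy1) as (l & Hl).
  assert (Hp : Permutation s (x :: y :: l)) by (eapply perm_trans; eauto).
  exists l. split; [|split].
  - apply Permutation_length in Hp. simpl in Hp. lia.
  - apply (Permutation_NoDup Hp Hs).
  - intro g. rewrite HEs. split; apply Permutation_in; auto. apply Permutation_sym; auto.
Qed.

Lemma pair_anticommutative (E : gset G) x y : has_card E 2 -> E x -> E y -> anticommutes x y ->
  anticommutative E.
Proof.
  intros Hc Hx Hy Hxy. destruct (has_card_enum_pair Hc Hx Hy Hxy) as ([|? ?] & Hl & _ & HE);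
    simpl in Hl; try lia.
  intros a b Ha Hb Hab. apply HE in Ha, Hb. apply ac_anti. apply ac_anti in Hxy.
  simpl in Ha, Hb. destruct Ha as [<-|[<-|[]]], Hb as [<-|[<-|[]]]; try congruence.
  rewrite acC; auto.
Qed.

(* Multiplying [c] by [x] flips its commutation with [y] and keeps it with [x], and vice versa. *)
Lemma triple_anticommutative_replacement (E : gset G) x y : basic E -> has_card E 3 ->
  E x -> E y -> anticommutes x y -> exists E', replacement E E' /\ anticommutative E'.
Proof.
  intros Hb Hc Hx Hy Hxy. destruct (has_card_enum_pair Hc Hx Hy Hxy) as
    ([|c [|? ?]] & Hl & Hn & HE); simpl in Hl; try lia.
  set (w := mul (if ac c y then one else x) (if ac c x then one else y)).
  destruct (@replacement_one (fun g => g = x \/ g = y) c w) as [Hr _].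
  - apply basic_ext with (2 := Hb). intro g. rewrite HE. simpl. intuition (subst; auto).
  - inversion Hn as [|? ? Hx' Hn']; inversion Hn' as [|? ? Hy' _]; subst; simpl in *.
    intros [<-|<-]; tauto.
  - unfold w. apply gen_groupM;
      [destruct (ac c y)|destruct (ac c x)]; auto using gen_group1, gen_group_gen.
  - exists (fun g => g = mul w c \/ g = x \/ g = y). split.
    + apply replacement_ext with (3 := Hr); intro g; [rewrite HE; simpl|]; intuition (subst; auto).
    + apply ac_anti in Hxy.
      assert (Hwcx : ac (mul w c) x = true).
      { unfold w. rewrite !ac_mull. destruct (ac c y), (ac c x) eqn:Ecx;
          rewrite ?ac1, ?acxx, ?(acC x y), ?Ecx, ?Hxy; auto. }
      assert (Hwcy : ac (mul w c) y = true).
      { unfold w. rewrite !ac_mull. destruct (ac c y) eqn:Ecy, (ac c x);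
          rewrite ?ac1, ?acxx, ?Ecy, ?Hxy; auto. }
      intros a b Ha Hb' Hab. apply ac_anti.
      destruct Ha as [->|[->| ->]], Hb' as [->|[->| ->]]; try congruence; auto; rewrite acC; auto.
Qed.

Lemma small_basic_anti_replacement (n : nat) (E : gset G) : (n = 2 \/ n = 3) -> basic E ->
  has_card E n -> (exists x y, E x /\ E y /\ anticommutes x y) ->
  exists E', replacement E E' /\ anticommutative E'.
Proof.
  intros [->| ->] HE Hc (x & y & Hx & Hy & Hxy).
  - exists E. split; [apply replacement_refl; auto|]. exact (pair_anticommutative Hc Hx Hy Hxy).
  - exact (triple_anticommutative_replacement HE Hc Hx Hy Hxy).
Qed.

Lemma ac_lprod_anticommuting (l : list G) k : (forall a, In a l -> ac a k = true) ->
  ac (lprod l) k = Nat.odd (length l).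
Proof.
  induction l as [|a l IH]; intro H. apply ac1.
  rewrite lprod_cons, ac_mull, H, IH; [|intros; apply H; simpl; auto|simpl; auto].
  simpl. rewrite Nat.odd_succ, <- Nat.negb_odd. reflexivity.
Qed.

Lemma ac_lprod_anticommutative (l : list G) k : NoDup l -> In k l ->
  (forall a, In a l -> a <> k -> ac a k = true) -> ac (lprod l) k = Nat.even (length l).
Proof.
  induction 1 as [|a l Ha Hn IH]; intros Hk H. destruct Hk.
  rewrite lprod_cons, ac_mull. cbn [length]. rewrite Nat.even_succ.
  destruct (classic (a = k)) as [->|Hne].
  - rewrite acxx, ac_lprod_anticommuting; auto.
    intros b Hb. apply H; simpl; auto. intros ->; contradiction.
  - destruct Hk as [->|Hk]; [congruence|].
    rewrite H, IH, <- Nat.negb_odd; simpl; auto.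
    + now destruct (Nat.odd (length l)).
    + intros b Hb; apply H; simpl; auto.
Qed.

Definition core_decomposition (K : list G) (M : gset G) : Prop :=
  NoDup K /\ (forall x, In x K -> ~ M x) /\ set_commute (fun x => In x K) M /\
  anticommutative (fun x => In x K) /\ commutative M.

Lemma core_sub K M (K' : list G) (M' : gset G) : core_decomposition K M -> NoDup K' ->
  incl K' K -> (forall g, M' g -> M g) -> core_decomposition K' M'.
Proof.
  intros (_ & Hd & Hs & Ha & Hc) Hn HK HM.
  split; [|split; [|split; [|split]]]; auto.
  - intros x Hx Hm. apply (Hd x); auto.
  - intros x y Hx Hy. apply Hs; auto.
  - intros x y Hx Hy. apply Ha; auto.
  - intros x y Hx Hy. apply Hc; auto.
Qed.

Lemma core_add_K K M (z : G) : core_decomposition K M -> ~ In z K -> ~ M z ->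
  (forall k, In k K -> anticommutes z k) -> (forall m, M m -> commutes z m) ->
  core_decomposition (K ++ [z]) M.
Proof.
  intros (Hn & Hd & Hs & Ha & Hc) HzK HzM Hzk Hzm.
  split; [|split; [|split; [|split]]]; auto.
  - apply NoDup_app; auto. repeat constructor; auto. intros a Ha' [->|[]]; auto.
  - intros x Hx. apply in_app_iff in Hx as [Hx|[<-|[]]]; auto.
  - intros x y Hx Hy. apply in_app_iff in Hx as [Hx|[<-|[]]]; auto.
  - intros x y Hx Hy Hxy. apply in_app_iff in Hx as [Hx|[<-|[]]], Hy as [Hy|[<-|[]]];
      auto; try congruence.
    apply ac_anti. rewrite acC. apply ac_anti; auto.
Qed.

Lemma core_add_M K M (z : G) : core_decomposition K M -> ~ In z K ->
  (forall k, In k K -> commutes k z) -> (forall m, M m -> commutes z m) ->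
  core_decomposition K (fun g => M g \/ g = z).
Proof.
  intros (Hn & Hd & Hs & Ha & Hc) HzK Hkz Hzm.
  split; [|split; [|split; [|split]]]; auto.
  - intros x Hx [Hm| ->]; [apply (Hd x)|]; auto.
  - intros x y Hx [Hy| ->]; auto.
  - intros x y [Hx| ->] [Hy| ->]; auto.
    + apply ac_comm. rewrite acC. apply ac_comm; auto.
    + reflexivity.
Qed.

Section AnticommutativeCore.
Variables (K : list G) (M : gset G).
Hypothesis E_basic : basic (fun x => In x K \/ M x).
Hypothesis K_M_core : core_decomposition K M.

Lemma ac_lprod_core_K k : In k K -> ac (lprod K) k = Nat.even (length K).
Proof.
  destruct K_M_core as (Hn & _ & _ & Ha & _). intro Hk.
  apply ac_lprod_anticommutative; auto. intros a Ha' Hne. apply ac_anti, Ha; auto.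
Qed.

Lemma ac_lprod_core_M m : M m -> ac (lprod K) m = false.
Proof.
  destruct K_M_core as (_ & _ & Hs & _ & _). intro Hm.
  apply ac_lprod_commuting. intros a Ha. apply ac_comm, Hs; auto.
Qed.

Lemma core_grow : Nat.Even (length K) -> (exists x, M x) ->
  exists (K' : list G) (M' : gset G),
    let E' := fun x => In x K' \/ M' x in
    replacement (fun x => In x K \/ M x) E' /\ NoDup K' /\ (forall x, In x K' -> ~ M' x) /\
    set_commute (fun x => In x K') M' /\
    anticommutative (fun x => In x K') /\ commutative M' /\
    length K' = length K + 1 /\
    exists m0, M m0 /\ equinumerous M' (fun x => M x /\ x <> m0).
Proof.
  intros Hev (m0 & Hm0). set (M' := fun g => M g /\ g <> m0).
  pose proof K_M_core as (Hn & Hd & Hs & _ & Hc).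
  destruct (@replacement_one (fun g => In g K \/ M' g) m0 (lprod K)) as [Hr Hz].
  - apply basic_ext with (2 := E_basic). intro g. unfold M'.
    destruct (classic (g = m0)); intuition congruence.
  - intros [H|[_ H]]; [apply (Hd m0)|]; auto.
  - apply gen_group_lprod. intros g Hg. apply gen_group_gen; auto.
  - set (z := mul (lprod K) m0) in Hr, Hz.
    assert (Hcore : core_decomposition (K ++ [z]) M').
    { apply core_add_K; [apply core_sub with K M; unfold M'; firstorder| | | |]; try tauto.
      - intros k Hk. apply ac_anti. unfold z.
        rewrite ac_mull, ac_lprod_core_K, (proj2 (Nat.even_spec _) Hev), acC,
          (proj2 (ac_comm _ _) (Hs _ _ Hk Hm0)); auto.
      - intros m [Hm _]. apply ac_comm. unfold z.
        rewrite ac_mull, ac_lprod_core_M, (proj2 (ac_comm _ _) (Hc _ _ Hm0 Hm)); auto. }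
    destruct Hcore as (Hn' & Hd' & Hs' & Ha' & Hc').
    exists (K ++ [z]), M'.
    refine (conj _ (conj Hn' (conj Hd' (conj Hs' (conj Ha' (conj Hc' (conj _ _))))))).
    + apply replacement_ext with (3 := Hr); intro g; [|rewrite in_app_iff; simpl]; unfold M';
        destruct (classic (g = m0)); intuition congruence.
    + rewrite length_app. reflexivity.
    + exists m0. split; auto. exists (fun g => g). split; [|split]; auto.
      intros g Hg. exists g. auto.
Qed.

Lemma core_shrink : Nat.Odd (length K) ->
  exists (K' : list G) (M' : gset G),
    let E' := fun x => In x K' \/ M' x in
    replacement (fun x => In x K \/ M x) E' /\ NoDup K' /\ (forall x, In x K' -> ~ M' x) /\
    set_commute (fun x => In x K') M' /\
    anticommutative (fun x => In x K') /\ commutative M' /\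
    length K' + 1 = length K /\
    exists m0, M' m0 /\ equinumerous M (fun x => M' x /\ x <> m0).
Proof.
  intro Hodd. pose proof K_M_core as (Hn & Hd & _ & _ & _).
  assert (HK : K <> []) by (intros HK; rewrite HK in Hodd; destruct Hodd; simpl in *; lia).
  destruct (exists_last HK) as (K0 & k0 & HK0).
  assert (HinK : forall g, In g K <-> g = k0 \/ In g K0).
  { intro g. rewrite HK0, in_app_iff. simpl. intuition congruence. }
  assert (HnK : NoDup (k0 :: K0)).
  { apply Permutation_NoDup with (K0 ++ [k0]); [|rewrite <- HK0; auto].
    apply Permutation_sym, Permutation_cons_append. }
  apply NoDup_cons_iff in HnK as [Hk0 HnK0].
  destruct (@replacement_one (fun g => In g K0 \/ M g) k0 (lprod K0)) as [Hr HP].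
  - apply basic_ext with (2 := E_basic). intro g. rewrite HinK. tauto.
  - intros [H|H]; auto. apply (Hd k0); auto. apply HinK; auto.
  - apply gen_group_lprod. intros g Hg. apply gen_group_gen; auto.
  - rewrite <- lprod_rcons, <- HK0 in Hr, HP.
    assert (Hcore : core_decomposition K0 (fun g => M g \/ g = lprod K)).
    { apply core_add_M; [apply core_sub with K M; auto; intros g Hg; apply HinK; auto| | |].
      - tauto.
      - intros k Hk. apply ac_comm. rewrite acC, ac_lprod_core_K by (apply HinK; auto).
        rewrite <- Nat.negb_odd, (proj2 (Nat.odd_spec _) Hodd). reflexivity.
      - intros m Hm. apply ac_comm, ac_lprod_core_M; auto. }
    destruct Hcore as (Hn' & Hd' & Hs' & Ha' & Hc').
    exists K0, (fun g => M g \/ g = lprod K).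
    refine (conj _ (conj Hn' (conj Hd' (conj Hs' (conj Ha' (conj Hc' (conj _ _))))))).
    + apply replacement_ext with (3 := Hr); intro g; [rewrite HinK|]; tauto.
    + rewrite HK0, length_app. reflexivity.
    + exists (lprod K). split; auto. exists (fun g => g). split; [|split]; auto.
      * intros g Hg. split; auto. intros ->. apply HP; auto.
      * intros g [[Hg| ->] Hne]; [exists g; auto|congruence].
Qed.

End AnticommutativeCore.

Definition dbl (N : option nat) : option nat :=
  match N with Some n => Some (2 * n) | None => None end.

(* Position [i >= 1] of an enumeration lies in the doubleton number [blk i], counted from 0. *)
Definition blk (i : nat) : nat := (i - 1) / 2.

Definition bounded (N : option nat) (m : nat) : Prop :=
  match N with Some n => m <= n | None => True end.

Lemma bounded_le N m m' : bounded N m -> m' <= m -> bounded N m'.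
Proof. destruct N; simpl; lia. Qed.

Lemma blk_cases i : 1 <= i -> i = 2 * blk i + 1 \/ i = 2 * blk i + 2.
Proof.
  intro. unfold blk. pose proof (Nat.div_mod (i - 1) 2). pose proof (Nat.mod_upper_bound (i - 1) 2).
  lia.
Qed.

Lemma blk_odd m : blk (2 * m + 1) = m.
Proof. unfold blk. replace (2 * m + 1 - 1) with (m * 2) by lia. apply Nat.div_mul. lia. Qed.

Lemma blk_even m : blk (2 * m + 2) = m.
Proof.
  unfold blk. replace (2 * m + 2 - 1) with (1 + m * 2) by lia. rewrite Nat.div_add by lia.
  reflexivity.
Qed.

Lemma idx_dbl N i : idx (dbl N) i <-> 1 <= i /\ bounded N (S (blk i)).
Proof.
  split; intros [Hi Hb]; split; auto; destruct N; simpl in *; auto;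
    destruct (blk_cases Hi); lia.
Qed.

Lemma idx_dbl_pair N m : bounded N (S m) -> idx (dbl N) (2 * m + 1) /\ idx (dbl N) (2 * m + 2).
Proof. intro Hm. rewrite !idx_dbl, blk_odd, blk_even. split; split; auto; lia. Qed.

(* [F (same pair) (same index)] encodes the commutation pattern: [fun _ e => negb e] for an
   anticommutative family, [fun s e => s && negb e] for a chain of commuting doubletons. *)
Section Pairing.
Variables (N : option nat) (x : nat -> G) (F : bool -> bool -> bool).
Hypothesis x_basic : basic (seq_set (dbl N) x).
Hypothesis x_ac : forall i j, idx (dbl N) i -> idx (dbl N) j ->
  ac (x i) (x j) = F (blk i =? blk j) (i =? j).
Hypothesis F_pair : F true false = true.

Definition paired (i : nat) : G := mul (prefix_prod x (2 * blk i)) (x i).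

Lemma pairing_F_diag j : idx (dbl N) j -> F true true = false.
Proof. intro Hj. rewrite <- (acxx (x j)), x_ac, !Nat.eqb_refl; auto. Qed.

Lemma ac_pair_product m j : bounded N (S m) -> idx (dbl N) j ->
  ac (mul (x (2 * m + 1)) (x (2 * m + 2))) (x j) = (j =? 2 * m + 1) || (j =? 2 * m + 2).
Proof.
  intros Hm Hj. destruct (idx_dbl_pair Hm) as [Hp Hq].
  assert (Hjb : j = 2 * blk j + 1 \/ j = 2 * blk j + 2) by (apply blk_cases; destruct Hj; auto).
  rewrite ac_mull, !x_ac, blk_odd, blk_even; auto.
  destruct (Nat.eqb_spec m (blk j)), (Nat.eqb_spec (2 * m + 1) j), (Nat.eqb_spec (2 * m + 2) j),
    (Nat.eqb_spec j (2 * m + 1)), (Nat.eqb_spec j (2 * m + 2)); try lia;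
    rewrite ?(pairing_F_diag Hj), ?F_pair; auto; destruct (F false false); auto.
Qed.

Lemma prefix_prod_pairs m : prefix_prod x (2 * S m) =
  mul (prefix_prod x (2 * m)) (mul (x (2 * m + 1)) (x (2 * m + 2))).
Proof.
  replace (2 * S m) with (S (S (2 * m))) by lia. rewrite !prefix_prodS, mulA.
  do 3 f_equal; lia.
Qed.

Lemma ac_prefix_pairs_x m j : bounded N m -> idx (dbl N) j ->
  ac (prefix_prod x (2 * m)) (x j) = (j <=? 2 * m).
Proof.
  intros Hm Hj. assert (Hj1 : 1 <= j) by (destruct Hj; auto).
  induction m as [|m IH].
  - destruct j; [lia|]. apply (ac1 (x _)).
  - assert (Hm' : bounded N m) by (apply bounded_le with (S m); auto).
    rewrite prefix_prod_pairs, ac_mull, ac_pair_product, IH; auto.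
    destruct (Nat.leb_spec j (2 * m)), (Nat.eqb_spec j (2 * m + 1)), (Nat.eqb_spec j (2 * m + 2)),
      (Nat.leb_spec j (2 * S m)); simpl; auto; lia.
Qed.

Lemma ac_prefix_pairs m m' : bounded N m -> bounded N m' ->
  ac (prefix_prod x (2 * m)) (prefix_prod x (2 * m')) = false.
Proof.
  intros Hm Hm'. induction m as [|m IH].
  - apply ac1.
  - assert (Hm0 : bounded N m) by (apply bounded_le with (S m); auto).
    destruct (idx_dbl_pair Hm) as [Hp Hq].
    rewrite prefix_prod_pairs, !ac_mull, IH, !(acC (prefix_prod x (2 * m'))),
      !ac_prefix_pairs_x; auto.
    destruct (Nat.leb_spec (2 * m + 1) (2 * m')), (Nat.leb_spec (2 * m + 2) (2 * m')); auto; lia.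
Qed.

Lemma ac_paired i j : idx (dbl N) i -> idx (dbl N) j ->
  ac (paired i) (paired j) = xorb (negb (blk i =? blk j)) (F (blk i =? blk j) (i =? j)).
Proof.
  intros Hi Hj. pose proof Hi as [Hi1 Hbi]%idx_dbl. pose proof Hj as [Hj1 Hbj]%idx_dbl.
  assert (Hbi' : bounded N (blk i)) by (apply bounded_le with (S (blk i)); auto).
  assert (Hbj' : bounded N (blk j)) by (apply bounded_le with (S (blk j)); auto).
  unfold paired. rewrite ac_mull, !ac_mulr, ac_prefix_pairs, ac_prefix_pairs_x,
    (acC (prefix_prod x _) (x i)), ac_prefix_pairs_x, x_ac; auto.
  destruct (blk_cases Hi1), (blk_cases Hj1), (Nat.leb_spec j (2 * blk i)),
    (Nat.leb_spec i (2 * blk j)), (Nat.eqb_spec (blk i) (blk j)); try lia;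
    destruct (F _ _); reflexivity.
Qed.

(* Equal generators would have the same commutation with the partner of either. *)
Lemma pairing_x_inj : inj_idx (dbl N) x.
Proof.
  intros i j Hi Hj Heq. destruct (Nat.eq_dec i j) as [|Hne]; auto. exfalso.
  pose proof Hi as [Hi1 Hbi]%idx_dbl. pose proof (proj1 Hj) as Hj1.
  assert (Hpartner : exists i', idx (dbl N) i' /\ blk i' = blk i /\ i' <> i).
  { destruct (idx_dbl_pair Hbi) as [Hp Hq].
    destruct (blk_cases Hi1); [exists (2 * blk i + 2)|exists (2 * blk i + 1)];
      rewrite ?blk_odd, ?blk_even; refine (conj _ (conj _ _)); auto; lia. }
  destruct Hpartner as (i' & Hi' & Hb' & Hne').
  assert (A1 := x_ac Hi Hi'). assert (A2 := x_ac Hj Hi'). assert (A3 := x_ac Hj Hi).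
  rewrite Heq, A2, Hb', Nat.eqb_refl in A1. rewrite Heq, acxx in A3.
  destruct (blk_cases Hi1), (blk_cases Hj1), (blk_cases (proj1 Hi')),
    (Nat.eqb_spec (blk j) (blk i)), (Nat.eqb_spec i i'), (Nat.eqb_spec j i'),
    (Nat.eqb_spec j i); try lia; rewrite ?F_pair, ?(pairing_F_diag Hj) in *; congruence.
Qed.

Lemma pairing_replacement :
  replacement (seq_set (dbl N) x) (seq_set (dbl N) paired) /\ inj_idx (dbl N) paired.
Proof.
  apply seq_triangular_replacement; auto using pairing_x_inj.
  intros i Hi. exists (prefix_prod x (2 * blk i)). split; auto.
  apply seq_set_mono with (2 * blk i); auto using gen_group_prefix_prod.
  destruct (blk_cases (proj1 Hi)); lia.
Qed.

End Pairing.

Definition doubletons (N : option nat) (a b : nat -> G) : gset G :=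
  fun g => exists k, idx N k /\ (g = a k \/ g = b k).

Definition commuting_doubletons (N : option nat) (a b : nat -> G) : Prop :=
  (forall k, idx N k -> anticommutes (a k) (b k)) /\
  (forall i j, idx N i -> idx N j -> i <> j ->
     set_commute (fun x => x = a i \/ x = b i) (fun y => y = a j \/ y = b j)).

Lemma blk_dbl_odd k : 1 <= k -> blk (2 * k - 1) = k - 1.
Proof. intro. replace (2 * k - 1) with (2 * (k - 1) + 1) by lia. apply blk_odd. Qed.

Lemma blk_dbl_even k : 1 <= k -> blk (2 * k) = k - 1.
Proof. intro. replace (2 * k) with (2 * (k - 1) + 2) by lia. apply blk_even. Qed.

Lemma idx_dbl_of_idx N k : idx N k -> idx (dbl N) (2 * k - 1) /\ idx (dbl N) (2 * k).
Proof.
  intros [Hk1 Hk]. rewrite !idx_dbl, blk_dbl_odd, blk_dbl_even by auto.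
  replace (S (k - 1)) with k by lia. split; split; auto; lia.
Qed.

Lemma seq_set_dbl N (y : nat -> G) g :
  seq_set (dbl N) y g <-> doubletons N (fun k => y (2 * k - 1)) (fun k => y (2 * k)) g.
Proof.
  split.
  - intros (i & Hi & <-). pose proof Hi as [Hi1 Hb]%idx_dbl. exists (S (blk i)).
    split; [split; auto; lia|]. destruct (blk_cases Hi1) as [E|E]; [left|right]; f_equal; lia.
  - intros (k & Hk & [->| ->]); [exists (2 * k - 1)|exists (2 * k)];
      split; auto; apply idx_dbl_of_idx; auto.
Qed.

Lemma commuting_doubletons_of_ac N (y : nat -> G) :
  (forall i j, idx (dbl N) i -> idx (dbl N) j ->
     ac (y i) (y j) = (blk i =? blk j) && negb (i =? j)) ->
  commuting_doubletons N (fun k => y (2 * k - 1)) (fun k => y (2 * k)).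
Proof.
  intro Hy. split.
  - intros k Hk. destruct (idx_dbl_of_idx Hk). apply ac_anti. rewrite Hy by auto.
    rewrite blk_dbl_odd, blk_dbl_even, Nat.eqb_refl by (destruct Hk; auto).
    destruct (Nat.eqb_spec (2 * k - 1) (2 * k)); auto. destruct Hk; lia.
  - intros i j Hi Hj Hne g h Hg Hh. destruct (idx_dbl_of_idx Hi), (idx_dbl_of_idx Hj).
    apply ac_comm.
    destruct Hi as [Hi1 _], Hj as [Hj1 _].
    destruct Hg as [->| ->], Hh as [->| ->]; rewrite Hy by auto;
      rewrite ?blk_dbl_odd, ?blk_dbl_even by auto;
      destruct (Nat.eqb_spec (i - 1) (j - 1)); auto; lia.
Qed.

Lemma anti_seq_doubletons_replacement N (x : nat -> G) :
  basic (seq_set (dbl N) x) -> inj_idx (dbl N) x ->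
  anticommutative (seq_set (dbl N) x) ->
  exists a b, replacement (seq_set (dbl N) x) (doubletons N a b) /\ commuting_doubletons N a b.
Proof.
  intros Hb Hinj Hanti.
  assert (Hx : forall i j, idx (dbl N) i -> idx (dbl N) j ->
    ac (x i) (x j) = (fun _ e => negb e) (blk i =? blk j) (i =? j)).
  { intros i j Hi Hj. destruct (Nat.eqb_spec i j) as [<-|Hne]; [apply acxx|].
    apply ac_anti, Hanti; try (eexists; eauto). intro He. apply Hne, Hinj; auto. }
  destruct (@pairing_replacement N x (fun _ e => negb e) Hb Hx eq_refl) as [Hr _].
  exists (fun k => paired x (2 * k - 1)), (fun k => paired x (2 * k)). split.
  - apply replacement_ext with (3 := Hr); [tauto|]. intro g. rewrite seq_set_dbl. tauto.
  - apply commuting_doubletons_of_ac. intros i j Hi Hj.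
    rewrite (@ac_paired N x (fun _ e => negb e)); auto.
    destruct (Nat.eqb_spec (blk i) (blk j)), (Nat.eqb_spec i j); subst; auto; congruence.
Qed.

Definition interleave (a b : nat -> G) (i : nat) : G :=
  if i =? 2 * blk i + 1 then a (S (blk i)) else b (S (blk i)).

Lemma interleave_cases (a b : nat -> G) i : 1 <= i ->
  (i = 2 * blk i + 1 /\ interleave a b i = a (S (blk i))) \/
  (i = 2 * blk i + 2 /\ interleave a b i = b (S (blk i))).
Proof.
  intro Hi. unfold interleave.
  destruct (blk_cases Hi) as [E|E]; [left|right];
    destruct (Nat.eqb_spec i (2 * blk i + 1)); split; auto; lia.
Qed.

Section Doubletons.
Variables (N : option nat) (a b : nat -> G).
Hypothesis ab_anti : forall k, idx N k -> anticommutes (a k) (b k).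
Hypothesis ab_comm : forall i j, idx N i -> idx N j -> i <> j ->
  set_commute (fun x => x = a i \/ x = b i) (fun y => y = a j \/ y = b j).

Lemma doubletons_interleave g : doubletons N a b g <-> seq_set (dbl N) (interleave a b) g.
Proof.
  rewrite seq_set_dbl. split; intros (k & Hk & Hg); exists k; split; auto;
    destruct Hk as [Hk1 _]; unfold interleave in *;
    rewrite ?blk_dbl_odd, ?blk_dbl_even in * by auto; replace (S (k - 1)) with k in * by lia;
    destruct (Nat.eqb_spec (2 * k - 1) (2 * (k - 1) + 1)),
      (Nat.eqb_spec (2 * k) (2 * (k - 1) + 1)); auto; lia.
Qed.

Lemma ac_interleave i j : idx (dbl N) i -> idx (dbl N) j ->
  ac (interleave a b i) (interleave a b j) = (blk i =? blk j) && negb (i =? j).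
Proof.
  intros Hi Hj. pose proof Hi as [Hi1 Hbi]%idx_dbl. pose proof Hj as [Hj1 Hbj]%idx_dbl.
  assert (Hki : idx N (S (blk i))) by (split; auto; lia).
  assert (Hkj : idx N (S (blk j))) by (split; auto; lia).
  destruct (Nat.eqb_spec (blk i) (blk j)) as [Hb|Hb].
  - destruct (interleave_cases a b Hi1) as [[Ei ->]|[Ei ->]],
      (interleave_cases a b Hj1) as [[Ej ->]|[Ej ->]]; rewrite Hb in *;
      destruct (Nat.eqb_spec i j); try lia; simpl; try apply acxx.
    + apply ac_anti; auto.
    + rewrite acC. apply ac_anti; auto.
  - apply ac_comm, (ab_comm Hki Hkj); [congruence
      |destruct (interleave_cases a b Hi1) as [[_ ->]|[_ ->]]
      |destruct (interleave_cases a b Hj1) as [[_ ->]|[_ ->]]]; auto.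
Qed.

(* No element lies in two doubletons: it would commute with its own partner. *)
Lemma doubletons_partition :
  ac_component_partition (doubletons N a b) N (fun k g => g = a k \/ g = b k).
Proof.
  assert (Hneq : forall k, idx N k -> a k <> b k) by (intros; apply anticommutes_neq; auto).
  split; [|split; [|split; [|split; [|split]]]].
  - intro g. reflexivity.
  - intros i j g Hi Hj Hgi Hgj. destruct (Nat.eq_dec i j) as [|Hne]; auto. exfalso.
    assert (Hc := ab_comm Hi Hj Hne). assert (Hab := proj2 (ac_anti _ _) (ab_anti Hi)).
    destruct Hgi as [->| ->].
    + assert (H := proj2 (ac_comm _ _) (Hc (b i) (a i) (or_intror eq_refl) Hgj)).
      rewrite acC in H. congruence.
    + assert (H := proj2 (ac_comm _ _) (Hc (a i) (b i) (or_introl eq_refl) Hgj)).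
      congruence.
  - intros k _. exists (a k). auto.
  - intros k Hk g h [->| ->] [->| ->] Hgh; try congruence; auto.
    apply ac_anti. rewrite acC. apply ac_anti; auto.
  - intros k Hk. left. exists 1. exists [a k; b k]. split; [|split; auto].
    + repeat constructor; auto. intros [H|[]]. apply (Hneq k); auto.
    + intro g. simpl. intuition congruence.
  - exact ab_comm.
Qed.

Lemma doubletons_anti_seq_replacement : basic (doubletons N a b) ->
  exists y, replacement (doubletons N a b) (seq_set (dbl N) y) /\ inj_idx (dbl N) y /\
    anticommutative (seq_set (dbl N) y).
Proof.
  intro Hb. set (x := interleave a b).
  assert (Hxb : basic (seq_set (dbl N) x))
    by (apply basic_ext with (2 := Hb), doubletons_interleave).
  assert (Hx : forall i j, idx (dbl N) i -> idx (dbl N) j ->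
    ac (x i) (x j) = (fun s e => s && negb e) (blk i =? blk j) (i =? j)) by exact ac_interleave.
  destruct (@pairing_replacement N x (fun s e => s && negb e) Hxb Hx eq_refl) as [Hr Hinj].
  exists (paired x). split; [|split]; auto.
  - apply replacement_ext with (3 := Hr); [apply doubletons_interleave|tauto].
  - intros g h (i & Hi & <-) (j & Hj & <-) Hne. apply ac_anti.
    rewrite (@ac_paired N x (fun s e => s && negb e)); auto.
    destruct (Nat.eqb_spec (blk i) (blk j)), (Nat.eqb_spec i j); subst; auto; congruence.
Qed.

End Doubletons.

Lemma has_card_dbl_enum (E : gset G) n : has_card E (2 * n) ->
  exists x, (forall g, E g <-> seq_set (dbl (Some n)) x g) /\ inj_idx (dbl (Some n)) x.
Proof.
  intros (s & Hn & Hl & Hs). exists (fun k => nth (k - 1) s one). split.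
  - intro g. rewrite Hs. split.
    + intros Hg. apply In_nth with (d := one) in Hg. destruct Hg as (i & Hi & <-).
      exists (S i). split; [split; simpl; lia|]. f_equal. lia.
    + intros (k & [Hk1 Hk] & <-). apply nth_In. simpl in Hk. lia.
  - intros i j [Hi1 Hi] [Hj1 Hj] He. simpl in Hi, Hj.
    assert (i - 1 = j - 1); [|lia]. apply (NoDup_nth s one); auto; lia.
Qed.

Lemma countable_dbl_enum (E : gset G) : countably_infinite E ->
  exists x, (forall g, E g <-> seq_set (dbl None) x g) /\ inj_idx (dbl None) x.
Proof.
  intros (f & Hf & Hs). exists (fun k => f (k - 1)). split.
  - intro g. rewrite Hs. split.
    + intros (k & <-). exists (S k). split; [split; simpl; auto; lia|]. f_equal. lia.
    + intros (k & Hk & <-). exists (k - 1). auto.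
  - intros i j [Hi _] [Hj _] He. apply Hf in He. lia.
Qed.

Lemma seq_set_dbl_card N (y : nat -> G) : inj_idx (dbl N) y ->
  (exists n, has_card (seq_set (dbl N) y) (2 * n)) \/ countably_infinite (seq_set (dbl N) y).
Proof.
  intro Hi. destruct N as [n|].
  - left. exists n. exists (map y (seq 1 (2 * n))). split; [|split].
    + apply FinFun.Injective_map_NoDup_in; [|apply seq_NoDup].
      intros i j Hi' Hj'. apply in_seq in Hi', Hj'. apply Hi; split; simpl; lia.
    + rewrite length_map, length_seq; auto.
    + intro g. rewrite in_map_iff. split.
      * intros (k & [Hk1 Hk] & <-). exists k. split; auto. apply in_seq. simpl in Hk. lia.
      * intros (k & <- & Hk). apply in_seq in Hk. exists k. split; auto. split; simpl; lia.
  - right. exists (fun k => y (S k)). split.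
    + intros i j He. apply Hi in He; [lia| |]; split; simpl; auto; lia.
    + intro g. split.
      * intros (k & [Hk1 _] & <-). exists (k - 1). f_equal. lia.
      * intros (k & <-). exists (S k). split; auto. split; simpl; auto; lia.
Qed.

Lemma anti_enum_doubletons_replacement (E : gset G) N x : generator E -> anticommutative E ->
  (forall g, E g <-> seq_set (dbl N) x g) -> inj_idx (dbl N) x ->
  exists a b, replacement E (doubletons N a b) /\ commuting_doubletons N a b.
Proof.
  intros Hg Ha Hx Hinj.
  destruct (@anti_seq_doubletons_replacement N x) as (a & b & Hr & Hc); auto.
  - apply basic_ext with (2 := Hg). exact Hx.
  - intros g h Hg' Hh. apply Ha; apply Hx; auto.
  - exists a, b. split; auto. apply replacement_ext with (3 := Hr); [exact Hx|tauto].
Qed.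

Lemma anti_doubletons_replacement (E : gset G) : generator E -> anticommutative E ->
  ((exists n, has_card E (2 * n)) \/ countably_infinite E) ->
  exists N a b, replacement E (doubletons N a b) /\ commuting_doubletons N a b.
Proof.
  intros Hg Ha [[n Hn]|Hc]; [destruct (has_card_dbl_enum Hn) as (x & Hx & Hinj)
    |destruct (countable_dbl_enum Hc) as (x & Hx & Hinj)];
    eexists; apply (anti_enum_doubletons_replacement Hg Ha Hx Hinj).
Qed.

Lemma doubleton_chain_anti_replacement (E : gset G) : generator E -> doubleton_chain E ->
  exists E', replacement E E' /\ anticommutative E' /\
    ((exists n, has_card E' (2 * n)) \/ countably_infinite E').
Proof.
  intros Hg (N & a & b & HE & Hab & Hcomm).
  destruct (@doubletons_anti_seq_replacement N a b) as (y & Hr & Hinj & Hanti); auto.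
  - apply basic_ext with (2 := Hg). exact HE.
  - exists (seq_set (dbl N) y). split; [|split; auto using seq_set_dbl_card].
    apply replacement_ext with (3 := Hr); [exact HE|tauto].
Qed.

Lemma single_component_partition (E : gset G) : (exists g, E g) -> anticommutative E ->
  ((exists n, has_card E (2 * n)) \/ countably_infinite E) ->
  ac_component_partition E (Some 1) (fun _ => E).
Proof.
  intros Hne Ha Hc.
  assert (H1 : forall i, idx (Some 1) i -> i = 1) by (intros i [? ?]; simpl in *; lia).
  split; [|split; [|split; [|split; [|split]]]]; auto.
  - intro g. split; [intros H; exists 1; repeat split; auto|intros (_ & _ & H); auto].
  - intros i j g Hi Hj _ _. rewrite (H1 i), (H1 j); auto.
  - intros i j Hi Hj Hij. exfalso. apply Hij. rewrite (H1 i), (H1 j); auto.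
Qed.

Lemma anti_doubleton_chain_replacement (E : gset G) : generator E -> anticommutative E ->
  ((exists n, has_card E (2 * n)) \/ countably_infinite E) ->
  exists E', replacement E E' /\ doubleton_chain E'.
Proof.
  intros Hg Ha Hc. destruct (anti_doubletons_replacement Hg Ha Hc) as (N & a & b & Hr & Hab).
  exists (doubletons N a b). split; auto. exists N, a, b. split; [tauto|exact Hab].
Qed.

Lemma anti_component_partition_replacement (E : gset G) : generator E -> anticommutative E ->
  ((exists n, has_card E (2 * n)) \/ countably_infinite E) ->
  exists E' J F, replacement E E' /\ ac_component_partition E' J F.
Proof.
  intros Hg Ha Hc.
  destruct (anti_doubletons_replacement Hg Ha Hc) as (N & a & b & Hr & [Hab Hcomm]).
  exists (doubletons N a b), N, (fun k g => g = a k \/ g = b k).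
  split; auto using doubletons_partition.
Qed.

Lemma countable_anti_component_partitions (E : gset G) : generator E -> anticommutative E ->
  countably_infinite E ->
  (exists E' n F, replacement E E' /\ ac_component_partition E' (Some n) F) /\
  (exists E' F, replacement E E' /\ ac_component_partition E' None F).
Proof.
  intros Hg Ha Hc. split.
  - exists E, 1, (fun _ => E). split; [apply replacement_refl; auto|].
    apply single_component_partition; auto.
    destruct Hc as (f & _ & Hf). exists (f 0). apply Hf. eauto.
  - destruct (countable_dbl_enum Hc) as (x & Hx & Hinj).
    destruct (anti_enum_doubletons_replacement Hg Ha Hx Hinj) as (a & b & Hr & [Hab Hcomm]).
    exists (doubletons None a b), (fun k g => g = a k \/ g = b k).
    split; auto using doubletons_partition.
Qed.

End SignedGroupTheory.

Theorem proposition5p2 : forall G : SignedGroup,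
  (* (1) *)
  (forall (n : nat) (E : gset G),
     (n = 2 \/ n = 3) -> basic E -> has_card E n ->
     (exists x y, E x /\ E y /\ anticommutes x y) ->
     exists E', replacement E E' /\ anticommutative E')
  /\
  (* (2) *)
  (forall (N : option nat) (u : nat -> G),
     basic_seq N u ->
     (forall k, idx N k -> idx N (S k) -> anticommutes (u k) (u (S k))) ->
     (forall i j, idx N i -> idx N j -> (i + 2 <= j \/ j + 2 <= i) ->
        commutes (u i) (u j)) ->
     let e := fun k => lprod (map u (seq 1 k)) in
     basic_seq N e /\
     (forall i j, idx N i -> idx N j -> i <> j -> anticommutes (e i) (e j)) /\
     (forall x, gen_group (seq_set N u) x <-> gen_group (seq_set N e) x) /\
     (forall k, idx N k ->
        u k = sg_mul (e (k - 1)) (e k) \/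
        u k = sg_mul sg_neg1 (sg_mul (e (k - 1)) (e k))))
  /\
  (* (3) *)
  (forall E : gset G,
     generator E -> anticommutative E ->
     ((exists n, has_card E (2 * n)) \/ countably_infinite E) ->
     exists E', replacement E E' /\ doubleton_chain E')
  /\
  (forall E : gset G,
     generator E -> doubleton_chain E ->
     exists E', replacement E E' /\ anticommutative E' /\
       ((exists n, has_card E' (2 * n)) \/ countably_infinite E'))
  /\
  (* (4) *)
  (forall E : gset G,
     generator E -> anticommutative E ->
     ((exists n, has_card E (2 * n)) \/ countably_infinite E) ->
     exists E' J F, replacement E E' /\ ac_component_partition E' J F)
  /\
  (forall E : gset G,
     generator E -> anticommutative E -> countably_infinite E ->
     (exists E' n F, replacement E E' /\ ac_component_partition E' (Some n) F)
     /\
     (exists E' F, replacement E E' /\ ac_component_partition E' None F))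
  /\
  (* (5) *)
  (forall (K : list G) (M : gset G),
     let E := fun x => In x K \/ M x in
     generator E -> NoDup K -> (forall x, In x K -> ~ M x) ->
     set_commute (fun x => In x K) M ->
     anticommutative (fun x => In x K) -> commutative M ->
     (Nat.Even (length K) -> (exists x, M x) ->
        exists (K' : list G) (M' : gset G),
          let E' := fun x => In x K' \/ M' x in
          replacement E E' /\ NoDup K' /\ (forall x, In x K' -> ~ M' x) /\
          set_commute (fun x => In x K') M' /\
          anticommutative (fun x => In x K') /\ commutative M' /\
          length K' = length K + 1 /\
          exists m0, M m0 /\ equinumerous M' (fun x => M x /\ x <> m0))
     /\
     (Nat.Odd (length K) ->
        exists (K' : list G) (M' : gset G),
          let E' := fun x => In x K' \/ M' x in
          replacement E E' /\ NoDup K' /\ (forall x, In x K' -> ~ M' x) /\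
          set_commute (fun x => In x K') M' /\
          anticommutative (fun x => In x K') /\ commutative M' /\
          length K' + 1 = length K /\
          exists m0, M' m0 /\ equinumerous M (fun x => M' x /\ x <> m0))).
Proof.
  intro G. split; [|split; [|split; [|split; [|split; [|split]]]]].
  - exact (@small_basic_anti_replacement G).
  - exact (@prefix_prod_replacement G).
  - exact (@anti_doubleton_chain_replacement G).
  - exact (@doubleton_chain_anti_replacement G).
  - exact (@anti_component_partition_replacement G).
  - exact (@countable_anti_component_partitions G).
  - intros K M E HE HnK HKM HsKM HaK HcM.
    assert (Hcore : core_decomposition K M) by (repeat split; auto).
    split; [apply core_grow|apply core_shrink]; auto.
Qed.
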